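(* Let $\kappa$ be a cardinal and let $(X,\tau)$ be a $\kappa$-exclusive space with Lindelöf degree $L(X)=\kappa$. Then $X$ is a D-space.
   Context: The Lindelöf degree $L(X)$ is the least cardinal $\kappa$ such that every open cover of $X$ has a subcover of cardinality at most $\kappa$. For a cardinal $\kappa$, $(X,\tau)$ is $\kappa$-exclusive if for every $x\in X$, every open neighborhood $U$ of $x$, and every $A\subseteq U$ with $x\notin A$ and $|A|\le\kappa$, there is an open neighborhood $V$ of $x$ with $V\subseteq U\setminus A$. An open neighborhood assignment is a function $N:X\to\tau$ with $x\in N(x)$ for all $x$. $X$ is a D-space if for every open neighborhood assignment $N$ there is a closed discrete $D\subseteq X$ with $\bigcup_{d\in D}N(d)=X$. *)

From HB Require Import structures.
From mathcomp Require Import all_boot all_order.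
From mathcomp Require Import boolp classical_sets functions cardinality.
From mathcomp Require Import topology.
Set Implicit Arguments. Unset Strict Implicit. Unset Printing Implicit Defensive.
Local Open Scope classical_set_scope.
Local Open Scope card_scope.

(* A cardinal kappa is represented by a type K (|K| = kappa);
   "|A| <= kappa" is  A #<= [set: K]  (an injection of A into K). *)

Definition open_covers_bounded_by (X : topologicalType) (K : Type) :=
  forall C : set (set X),
    (forall U, C U -> open U) -> \bigcup_(U in C) U = setT ->
    exists C' : set (set X), C' `<=` C /\ C' #<= [set: K] /\
      \bigcup_(U in C') U = setT.

Definition Lindelof_degree_eq (X : topologicalType) (K : Type) :=
  open_covers_bounded_by X K /\
  forall L : Type, open_covers_bounded_by X L -> [set: K] #<= [set: L].

Definition exclusive (X : topologicalType) (K : Type) :=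
  forall (x : X) (U : set X) (A : set X),
    open U -> U x -> A `<=` U -> ~ A x -> A #<= [set: K] ->
    exists V : set X, open V /\ V x /\ V `<=` U `\` A.

Definition open_nbhd_assignment (X : topologicalType) (N : X -> set X) :=
  forall x, open (N x) /\ N x x.

Definition closed_discrete (X : topologicalType) (D : set X) :=
  closed D /\ forall d, D d -> exists U : set X, open U /\ U `&` D = [set d].

Definition D_space (X : topologicalType) :=
  forall N : X -> set X, open_nbhd_assignment N ->
    exists D : set X, closed_discrete D /\ \bigcup_(d in D) N d = setT.

From mathcomp Require Import all_boot boolp classical_sets cardinality topology.
Local Open Scope classical_set_scope.
Local Open Scope card_scope.

(* In a kappa-exclusive space every set of size at most kappa is closed, hence
   so is each of its subsets; such a set is therefore closed and discrete.
   Applying L(X) <= kappa to the cover {N x} gives at most kappa points whose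
   neighbourhoods already cover X, and they form the required kernel. *)

Section ExclusiveSpace.
Context {K : Type} {X : topologicalType}.
Hypothesis exX : exclusive X K.

Lemma exclusive_small_closed (A : set X) : A #<= [set: K] -> closed A.
Proof.
move=> AK; rewrite -openC openE => x Ax.
have [V [oV [Vx VA]]] := exX x setT A openT I (fun _ _ => I) Ax AK.
by apply: (@filterS _ _ _ V); [move=> y /VA [] | exact: open_nbhs_nbhs].
Qed.

Lemma exclusive_small_closed_discrete (A : set X) :
  A #<= [set: K] -> closed_discrete A.
Proof.
move=> AK; split; first exact: exclusive_small_closed.
move=> a Aa; exists (~` (A `\ a)); split.
  rewrite openC; apply: exclusive_small_closed.
  exact: card_le_trans (card_le_setD _ _) AK.
apply/seteqP; split=> [y [nAy Ay]|y ->{y}]; last by split=> // -[_ /(_ erefl)].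
by apply: contrapT => ya; apply: nAy.
Qed.

End ExclusiveSpace.

Lemma open_nbhd_assignment_small_kernel {K : Type} {X : topologicalType}
    {N : X -> set X} :
  open_covers_bounded_by X K -> open_nbhd_assignment N ->
  exists D : set X, D #<= [set: K] /\ \bigcup_(d in D) N d = setT.
Proof.
move=> cov hN.
have [[x0 _]|noX] := pselect (exists x : X, True); last first.
  exists set0; split.
    by apply: card_le_trans (subset_card_le (sub0set _)); rewrite card_le0.
  by apply/seteqP; split=> // x; case: noX; exists x.
have rangeN_open : forall U, range N U -> open U.
  by move=> U [x _ <-]; exact: (hN x).1.
have rangeN_cover : \bigcup_(U in range N) U = setT.
  by apply/seteqP; split=> // x _; exists (N x); [exists x | exact: (hN x).2].
have [C' [C'N [C'K C'cov]]] := cov _ rangeN_open rangeN_cover.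
have preimage : forall U, exists x, C' U -> N x = U.
  by move=> U; have [/C'N [x _ <-]|] := pselect (C' U); [exists x | exists x0].
have [f fK] := choice preimage.
exists (f @` C'); split; first exact: card_le_trans (card_image_le _ _) C'K.
apply/seteqP; split=> // x _.
have [U C'U Ux] : (\bigcup_(U in C') U) x by rewrite C'cov.
by exists (f U); [exists U | rewrite fK].
Qed.

Theorem mainTheorem6 (K : Type) (X : topologicalType) :
  exclusive X K -> Lindelof_degree_eq X K -> D_space X.
Proof.
move=> exX [covK _] N hN.
have [D [DK DN]] := open_nbhd_assignment_small_kernel covK hN.
by exists D; split; first exact: exclusive_small_closed_discrete exX _ DK.
Qed.
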